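(* Let $G$ be a graph, $x\in V(G)$ and $N_G(x)=Y\cup Z$ a partition into disjoint (possibly empty) sets. Then $\operatorname{Ind}(\mathcal{L}_x(G;Y,Z))$ is homotopy equivalent to the (unreduced) suspension $\Sigma\operatorname{Ind}(G)$.
   Context: $\operatorname{Ind}(G)$ is the independence complex of $G$. The Lozin transform $\mathcal{L}_x(G;Y,Z)$: delete $x$, add four new vertices $y,a,b,z$ with edges $ya,ab,bz$, and join $y$ to every vertex of $Y$ and $z$ to every vertex of $Z$. *)

From HB Require Import structures.
From mathcomp Require Import all_boot.
From Stdlib Require Import Reals.

Set Implicit Arguments.
Unset Strict Implicit.
Unset Printing Implicit Defensive.

Definition simple_graph (V : finType) (e : rel V) : Prop :=
  symmetric e /\ irreflexive e.

(* Abstract simplicial complexes on V are represented by their predicate of faces. *)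

Definition Ind (V : finType) (e : rel V) (s : {set V}) : Prop :=
  forall u v, u \in s -> v \in s -> ~~ e u v.

(* Unreduced (simplicial) suspension S^0 * K, with the two cone points
   inr true, inr false. Its realization is homeomorphic to the unreduced
   suspension of |K|. *)
Definition suspension (V : finType) (K : {set V} -> Prop)
  (s : {set (V + bool)}) : Prop :=
  K [set v | inl v \in s] /\
  ~ ((inr true : V + bool) \in s /\ (inr false : V + bool) \in s).

(* Geometric realization inside R^V (barycentric coordinates). *)
Definition realization (V : finType) (K : {set V} -> Prop) (p : V -> R) : Prop :=
  (forall v, (0 <= p v)%R) /\
  \big[Rplus/0%R]_(v : V) p v = 1%R /\
  exists s, K s /\ forall v, p v <> 0%R -> v \in s.

Definition close (V : finType) (p q : V -> R) (d : R) : Prop :=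
  forall v, (Rabs (p v - q v) < d)%R.

Definition maps_into (V W : finType) (X : (V -> R) -> Prop) (Y : (W -> R) -> Prop)
  (f : (V -> R) -> (W -> R)) : Prop :=
  forall p, X p -> Y (f p).

Definition continuous_on (V W : finType) (X : (V -> R) -> Prop)
  (f : (V -> R) -> (W -> R)) : Prop :=
  forall p, X p -> forall eps, (0 < eps)%R ->
    exists delta, (0 < delta)%R /\
      forall q, X q -> close p q delta -> close (f p) (f q) eps.

Definition homotopic (V W : finType) (X : (V -> R) -> Prop) (Y : (W -> R) -> Prop)
  (f g : (V -> R) -> (W -> R)) : Prop :=
  exists H : R -> (V -> R) -> (W -> R),
    (forall t p, (0 <= t <= 1)%R -> X p -> Y (H t p)) /\
    (forall p, X p -> forall w, H 0%R p w = f p w /\ H 1%R p w = g p w) /\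
    (forall t p, (0 <= t <= 1)%R -> X p -> forall eps, (0 < eps)%R ->
       exists delta, (0 < delta)%R /\
         forall t' q, (0 <= t' <= 1)%R -> X q ->
           (Rabs (t - t') < delta)%R -> close p q delta ->
           close (H t p) (H t' q) eps).

Definition homotopy_equivalent (V W : finType) (X : (V -> R) -> Prop)
  (Y : (W -> R) -> Prop) : Prop :=
  exists (f : (V -> R) -> (W -> R)) (g : (W -> R) -> (V -> R)),
    maps_into X Y f /\ maps_into Y X g /\
    continuous_on X f /\ continuous_on Y g /\
    homotopic X X (fun p => g (f p)) (fun p => p) /\
    homotopic Y Y (fun q => f (g q)) (fun q => q).

(* Vertex type of the Lozin transform: V minus x, plus four new vertices
   0 = y, 1 = a, 2 = b, 3 = z. *)
Definition LV (V : finType) (x : V) : finType := ({v : V | v != x} + 'I_4)%type.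

Definition lozin_rel (V : finType) (e : rel V) (x : V) (Y Z : {set V}) : rel (LV x) :=
  fun a b =>
    match a, b with
    | inl u, inl w => e (val u) (val w)
    | inl u, inr i => ((val i == 0) && (val u \in Y)) || ((val i == 3) && (val u \in Z))
    | inr i, inl u => ((val i == 0) && (val u \in Y)) || ((val i == 3) && (val u \in Z))
    | inr i, inr j => (val i == (val j).+1) || (val j == (val i).+1)
    end.

Arguments lozin_rel {V} e x Y Z : rename.

From HB Require Import structures.
From mathcomp Require Import all_boot.
From Stdlib Require Import Reals Lra.

Set Implicit Arguments.
Unset Strict Implicit.
Unset Printing Implicit Defensive.

(* The new vertices form the path y - a - b - z.  In barycentric coordinates,
   [collapse] gives x the weight 2 min(p_y, p_z), positive only when y and z are
   both charged and hence no vertex of N(x) = Y ∪ Z is; the north pole gets p_b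
   plus the excess of p_y, the south pole p_a plus the excess of p_z, and
   independence along the path forces one of the two to vanish.  [expand] spreads
   the weights of x and of the poles back over the path.  Both maps are piecewise
   linear, hence Lipschitz, and each composite is joined to the identity by
   straight-line homotopies, which stay in the complex because at every point the
   supports of their two ends span a face.  On the Lozin side this needs the
   intermediate map [rebalance], which shifts weight between y and z. *)

Lemma RplusA : associative Rplus. Proof. by move=> a b c; rewrite Rplus_assoc. Qed.
HB.instance Definition _ := Monoid.isComLaw.Build R 0%R Rplus RplusA Rplus_comm Rplus_0_l.

Local Open Scope R_scope.

Lemma Rle_eq_or_lt r : 0 <= r -> r = 0 \/ 0 < r.
Proof. by case/Rle_lt_or_eq_dec; [right | left]. Qed.

Lemma close_le (T : finType) (p q : T -> R) d d' : d <= d' -> close p q d -> close p q d'.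
Proof. by move=> Hd H w; have := H w; lra. Qed.

Definition supp (T : finType) (p : T -> R) : {set T} :=
  [set w | if Req_EM_T (p w) 0 then false else true].

Lemma in_supp (T : finType) (p : T -> R) w : w \in supp p <-> p w <> 0.
Proof. by rewrite inE; case: Req_EM_T. Qed.

Lemma in_supp_ge0 (T : finType) (p : T -> R) w :
  0 <= p w -> w \in supp p <-> 0 < p w.
Proof. by move=> Hw; rewrite in_supp; case: (Rle_eq_or_lt Hw) => E; split; lra. Qed.

Lemma supp_addr (T : finType) (a b : T -> R) :
  (forall w, 0 <= a w) -> (forall w, 0 <= b w) ->
  supp (fun w => a w + b w) = supp a :|: supp b.
Proof.
move=> Ha Hb; apply/setP => w; move: (Ha w) (Hb w) => Haw Hbw.
apply/idP/setUP; rewrite !in_supp_ge0 //; [| lra | by case; lra | lra].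
by case: (Rle_eq_or_lt Haw) => Ea; [right | left]; lra.
Qed.

Lemma supp_subset (T : finType) (a b : T -> R) :
  (forall w, 0 <= a w) -> (forall w, 0 <= b w) -> (forall w, 0 < a w -> 0 < b w) ->
  supp a \subset supp b.
Proof.
by move=> Ha Hb H; apply/subsetP => w; rewrite !in_supp_ge0 //; apply: H.
Qed.

Definition downclosed (T : finType) (K : {set T} -> Prop) :=
  forall s t : {set T}, K s -> t \subset s -> K t.

Lemma realizationE (T : finType) (K : {set T} -> Prop) p : downclosed K ->
  realization K p <->
  [/\ forall v, 0 <= p v, \big[Rplus/0]_v p v = 1 & K (supp p)].
Proof.
move=> dK; split.
  move=> [H0 [H1 [s [Ks Hs]]]]; split => //; apply: dK Ks _.
  by apply/subsetP => w /in_supp; apply: Hs.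
by move=> [H0 H1 HK]; split => //; split => //; exists (supp p); split => // v /in_supp.
Qed.

Lemma realization_ge0 (T : finType) (K : {set T} -> Prop) p v :
  realization K p -> 0 <= p v.
Proof. by case. Qed.

Lemma realization_le1 (T : finType) (K : {set T} -> Prop) p v :
  realization K p -> p v <= 1.
Proof.
move=> [H0 [H1 _]]; move: H1; rewrite (bigD1 v) //= => H1.
suff : 0 <= \big[Rplus/0]_(w | w != v) p w by lra.
by apply: (big_ind (fun r => 0 <= r)) => //; [lra | move=> a b; lra].
Qed.

Lemma realization_segment (T : finType) (K : {set T} -> Prop) a b t :
  0 <= t <= 1 -> realization K a -> realization K b ->
  K (supp a :|: supp b) -> realization K (fun w => a w + t * (b w - a w)).
Proof.
move=> Ht [Ha0 [Ha1 _]] [Hb0 [Hb1 _]] HK; split.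
  move=> v; have := Ha0 v; have := Hb0 v => ? ?.
  have : 0 <= (1 - t) * a v by apply: Rmult_le_pos; lra.
  have : 0 <= t * b v by apply: Rmult_le_pos; lra.
  lra.
split.
  have -> : \big[Rplus/0]_w (a w + t * (b w - a w)) =
      \big[Rplus/0]_w a w + t * (\big[Rplus/0]_w b w - \big[Rplus/0]_w a w).
    apply: (big_rec3 (fun sa sb s => s = sa + t * (sb - sa))); first ring.
    by move=> i sa sb s _ ->; ring.
  by rewrite Ha1 Hb1; ring.
exists (supp a :|: supp b); split => // v Hv; apply/setUP.
case: (Req_EM_T (a v) 0) => Ea; last by left; apply/in_supp.
by right; apply/in_supp => Eb; apply: Hv; rewrite Ea Eb; ring.
Qed.

Definition lipschitz (T U : finType) (C : R) (F : (T -> R) -> (U -> R)) :=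
  forall p q d, 0 < d -> close p q d -> close (F p) (F q) (C * d).

Lemma lipschitz_continuous (T U : finType) (X : (T -> R) -> Prop) C
    (F : (T -> R) -> (U -> R)) :
  0 < C -> lipschitz C F -> continuous_on X F.
Proof.
move=> HC HF p _ eps He; have Hd : 0 < eps / C by apply: Rdiv_lt_0_compat.
exists (eps / C); split => // q _ Hpq; have := HF p q _ Hd Hpq.
by have -> : C * (eps / C) = eps by field; lra.
Qed.

Lemma lipschitz_comp (T U W : finType) C1 C2 (F : (T -> R) -> (U -> R))
    (G : (U -> R) -> (W -> R)) :
  0 < C1 -> lipschitz C1 F -> lipschitz C2 G -> lipschitz (C2 * C1) (fun p => G (F p)).
Proof.
move=> H1 HF HG p q d Hd Hpq; rewrite Rmult_assoc.
by apply: HG (HF _ _ _ Hd Hpq); apply: Rmult_lt_0_compat.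
Qed.

Lemma lipschitz_id (T : finType) : lipschitz 1 (fun p : T -> R => p).
Proof. by move=> p q d _ H; rewrite Rmult_1_l. Qed.

Lemma Rabs_mult_le1 s u : Rabs s <= 1 -> Rabs (s * u) <= Rabs u.
Proof.
by move=> Hs; rewrite Rabs_mult; have := Rabs_pos u; have := Rabs_pos s; nra.
Qed.

Lemma homotopic_segment (T U : finType) (X : (T -> R) -> Prop) (K : {set U} -> Prop)
    (A C : (T -> R) -> (U -> R)) LA LC :
  0 <= LA -> 0 <= LC -> lipschitz LA A -> lipschitz LC C ->
  maps_into X (realization K) A -> maps_into X (realization K) C ->
  (forall p, X p -> K (supp (A p) :|: supp (C p))) ->
  homotopic X (realization K) A C.
Proof.
move=> HLA HLC LA_A LC_C RA RC HK.
exists (fun t p w => A p w + t * (C p w - A p w)); split; [|split].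
- by move=> t p Ht Hp; apply: realization_segment; [| apply: RA | apply: RC | apply: HK].
- by move=> p _ w; split; ring.
move=> t p Ht Hp eps He; set L := LA + LC + 1.
have HL : 0 < L by rewrite /L; lra.
have Hd : 0 < eps / L by apply: Rdiv_lt_0_compat.
exists (eps / L); split => // t' q Ht' Hq Htt Hpq w.
have := LA_A _ _ _ Hd Hpq w; have := LC_C _ _ _ Hd Hpq w.
have Cq1 := realization_le1 w (RC q Hq); have Cq0 := realization_ge0 w (RC q Hq).
have Aq1 := realization_le1 w (RA q Hq); have Aq0 := realization_ge0 w (RA q Hq).
have E : LA * (eps / L) + LC * (eps / L) + eps / L = eps by rewrite /L; field; lra.
move: Htt E; set d := eps / L.
move=> Htt E Hc Ha.
set a := A p w in Ha *; set a' := A q w in Ha Aq0 Aq1 *.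
set c := C p w in Hc *; set c' := C q w in Hc Cq0 Cq1 *.
have -> : a + t * (c - a) - (a' + t' * (c' - a')) =
  (1 - t) * (a - a') + t * (c - c') + (c' - a') * (t - t') by ring.
have B1 := @Rabs_mult_le1 (1 - t) (a - a') ltac:(apply: Rabs_le; lra).
have B2 := @Rabs_mult_le1 t (c - c') ltac:(apply: Rabs_le; lra).
have B3 := @Rabs_mult_le1 (c' - a') (t - t') ltac:(apply: Rabs_le; lra).
have T1 := Rabs_triang ((1 - t) * (a - a') + t * (c - c')) ((c' - a') * (t - t')).
have T2 := Rabs_triang ((1 - t) * (a - a')) (t * (c - c')).
lra.
Qed.

Lemma homotopic_trans (T U : finType) (X : (T -> R) -> Prop) (Y : (U -> R) -> Prop)
    (f g h : (T -> R) -> (U -> R)) :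
  homotopic X Y f g -> homotopic X Y g h -> homotopic X Y f h.
Proof.
move=> [H1 [H1Y [H1e H1c]]] [H2 [H2Y [H2e H2c]]].
exists (fun t p => if Rle_dec t (1/2) then H1 (2 * t) p else H2 (2 * t - 1) p).
split; [|split].
- by move=> t p Ht Hp; case: Rle_dec => Ht2; [apply: H1Y | apply: H2Y] => //; lra.
- move=> p Hp w; split; case: Rle_dec => ?; try lra.
    by replace (2 * 0) with 0 by ring; apply: (H1e p Hp w).1.
  by replace (2 * 1 - 1) with 1 by ring; apply: (H2e p Hp w).2.
move=> t p Ht Hp eps He.
have [Hlt|[Heq|Hgt]] := Rtotal_order t (1/2).
- have [d [Hd C1]] := H1c (2 * t) p ltac:(lra) Hp eps He.
  exists (Rmin (d / 2) (1/2 - t)); split; first by apply: Rmin_pos; lra.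
  move=> t' q Ht' Hq Htt Hpq; have := Rmin_l (d / 2) (1/2 - t).
  have := Rmin_r (d / 2) (1/2 - t); move: Htt => /Rabs_def2 [? ?] ? ?.
  do 2 case: Rle_dec => ? //; try lra.
  apply: C1 => //; first lra; first by apply: Rabs_def1; lra.
  by apply: close_le Hpq; lra.
- subst t; have [d1 [Hd1 C1]] := H1c 1 p ltac:(lra) Hp eps He.
  have [d2 [Hd2 C2]] := H2c 0 p ltac:(lra) Hp eps He.
  exists (Rmin d1 d2 / 2); split; first by apply: Rdiv_lt_0_compat; [apply: Rmin_pos|]; lra.
  move=> t' q Ht' Hq Htt Hpq; have := Rmin_l d1 d2; have := Rmin_r d1 d2.
  move: Htt => /Rabs_def2 [? ?] ? ?.
  case: Rle_dec => [?|?]; last lra; replace (2 * (1/2)) with 1 by field.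
  case: Rle_dec => ?.
    apply: C1 => //; first lra; first by apply: Rabs_def1; lra.
    by apply: close_le Hpq; lra.
  move=> w /=; rewrite (H1e p Hp w).2 -(H2e p Hp w).1.
  apply: C2 => //; first lra; first by apply: Rabs_def1; lra.
  by apply: close_le Hpq; lra.
- have [d [Hd C2]] := H2c (2 * t - 1) p ltac:(lra) Hp eps He.
  exists (Rmin (d / 2) (t - 1/2)); split; first by apply: Rmin_pos; lra.
  move=> t' q Ht' Hq Htt Hpq; have := Rmin_l (d / 2) (t - 1/2).
  have := Rmin_r (d / 2) (t - 1/2); move: Htt => /Rabs_def2 [? ?] ? ?.
  do 2 case: Rle_dec => ? //; try lra.
  apply: C2 => //; first lra; first by apply: Rabs_def1; lra.
  by apply: close_le Hpq; lra.
Qed.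

Lemma Ind_downclosed (T : finType) (r : rel T) : downclosed (Ind r).
Proof. by move=> s t Hs /subsetP Hts u v Hu Hv; apply: Hs; apply: Hts. Qed.

Lemma suspension_downclosed (T : finType) (K : {set T} -> Prop) :
  downclosed K -> downclosed (suspension K).
Proof.
move=> dK s t [Hs1 Hs2] /subsetP Hts; split.
  by apply: dK Hs1 _; apply/subsetP => u; rewrite !inE => /Hts.
by move=> [H1 H2]; apply: Hs2; split; apply: Hts.
Qed.

Lemma Ind_suppE (T : finType) (r : rel T) (c : T -> R) : (forall w, 0 <= c w) ->
  Ind r (supp c) <-> forall u v, 0 < c u -> 0 < c v -> ~~ r u v.
Proof.
by move=> Hc; split=> H u v Hu Hv; apply: H; apply/(in_supp_ge0 (Hc _)).
Qed.

Definition susp_indep (T : finType) (r : rel T) (c : T + bool -> R) :=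
  (forall u v, 0 < c (inl u) -> 0 < c (inl v) -> ~~ r u v) /\
  (c (inr true) = 0 \/ c (inr false) = 0).

Lemma suspension_Ind_suppE (T : finType) (r : rel T) (c : T + bool -> R) :
  (forall w, 0 <= c w) -> suspension (Ind r) (supp c) <-> susp_indep r c.
Proof.
move=> Hc; rewrite /suspension /susp_indep.
have -> : [set v | inl v \in supp c] = supp (fun v => c (inl v)).
  by apply/setP => v; rewrite !inE.
rewrite Ind_suppE // (in_supp_ge0 (Hc _)) (in_supp_ge0 (Hc _)).
split=> -[H1 H2]; split=> //; last by case: H2 => ->; lra.
case: (Rle_eq_or_lt (Hc (inr true))) => Et; first by left.
by case: (Rle_eq_or_lt (Hc (inr false))) => Ef; [right | case: H2].
Qed.

Definition pos (r : R) := Rmax 0 r.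

Definition collapse_x (py pz : R) := 2 * Rmin py pz.
Definition collapse_north (py pb pz : R) := pb + py - Rmin py pz.
Definition collapse_south (py pa pz : R) := pa + pz - Rmin py pz.

Definition expand_y (n w s : R) := pos (w / 2 - s) + Rmin (2 * n) w.
Definition expand_a (n w s : R) := pos (s - w / 2).
Definition expand_b (n w s : R) := pos (n - w / 2).
Definition expand_z (n w s : R) := pos (w / 2 - n) + Rmin (2 * s) w.

Definition rebalance_z (py pz : R) := pos (Rmin (2 * pz - py) (py + pz)).
Definition rebalance_y (py pz : R) := py + pz - rebalance_z py pz.

Definition path4_indep (py pa pb pz : R) :=
  [/\ py = 0 \/ pa = 0, pa = 0 \/ pb = 0 & pb = 0 \/ pz = 0].

Ltac case_minmax :=
  unfold collapse_x, collapse_north, collapse_south, expand_y, expand_a, expand_b,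
    expand_z, rebalance_y, rebalance_z, pos, Rmin, Rmax in *;
  repeat match goal with
  | |- context [Rle_dec ?a ?b] => destruct (Rle_dec a b)
  | H : context [Rle_dec ?a ?b] |- _ => destruct (Rle_dec a b)
  end.

Lemma collapse_ge0 py pa pb pz : 0 <= py -> 0 <= pa -> 0 <= pb -> 0 <= pz ->
  [/\ 0 <= collapse_x py pz, 0 <= collapse_north py pb pz & 0 <= collapse_south py pa pz].
Proof. by move=> *; split; case_minmax; lra. Qed.

Lemma collapse_x_gt0 py pz : 0 < collapse_x py pz -> 0 < py /\ 0 < pz.
Proof. by move=> ?; split; case_minmax; lra. Qed.

Lemma collapse_poles py pa pb pz : 0 <= py -> 0 <= pz -> path4_indep py pa pb pz ->
  collapse_north py pb pz = 0 \/ collapse_south py pa pz = 0.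
Proof. by move=> ? ? [[?|?] [?|?] [?|?]]; subst; case_minmax; lra. Qed.

Lemma expand_ge0 n w s : 0 <= n -> 0 <= w -> 0 <= s ->
  [/\ 0 <= expand_y n w s, 0 <= expand_a n w s, 0 <= expand_b n w s & 0 <= expand_z n w s].
Proof. by move=> *; split; case_minmax; lra. Qed.

Lemma expand_sum n w s : 0 <= w -> n = 0 \/ s = 0 ->
  expand_y n w s + expand_a n w s + expand_b n w s + expand_z n w s = n + w + s.
Proof. by move=> ? [->|->]; case_minmax; lra. Qed.

Lemma expand_y_gt0 n w s : 0 <= s -> 0 < expand_y n w s -> 0 < w.
Proof. by move=> *; case_minmax; lra. Qed.

Lemma expand_z_gt0 n w s : 0 <= n -> 0 < expand_z n w s -> 0 < w.
Proof. by move=> *; case_minmax; lra. Qed.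

Lemma expand_path4_indep n w s : 0 <= n -> 0 <= w -> n = 0 \/ s = 0 ->
  path4_indep (expand_y n w s) (expand_a n w s) (expand_b n w s) (expand_z n w s).
Proof. by move=> ? ? [->|->]; split; case_minmax; first [left; lra | right; lra]. Qed.

Lemma collapse_expand_gt0 n w s : 0 <= n -> 0 <= w -> 0 <= s -> n = 0 \/ s = 0 ->
  let y := expand_y n w s in let a := expand_a n w s in
  let b := expand_b n w s in let z := expand_z n w s in
  [/\ 0 < collapse_x y z -> 0 < w, 0 < collapse_north y b z -> 0 < n
    & 0 < collapse_south y a z -> 0 < s].
Proof. by move=> ? ? ? [->|->] /=; split=> ?; case_minmax; lra. Qed.

Lemma rebalance_ge0 py pz : 0 <= py -> 0 <= pz ->
  0 <= rebalance_y py pz /\ 0 <= rebalance_z py pz.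
Proof. by move=> *; split; case_minmax; lra. Qed.

Lemma rebalance_gt0 py pz : 0 <= py -> 0 <= pz ->
  (0 < rebalance_y py pz -> 0 < py) /\ (0 < rebalance_z py pz -> 0 < pz).
Proof. by move=> *; split=> ?; case_minmax; lra. Qed.

Section ExpandCollapse.
Variables py pa pb pz : R.
Hypotheses (py0 : 0 <= py) (pa0 : 0 <= pa) (pb0 : 0 <= pb) (pz0 : 0 <= pz).
Hypothesis path : path4_indep py pa pb pz.
Let n := collapse_north py pb pz.
Let w := collapse_x py pz.
Let s := collapse_south py pa pz.

Lemma expand_collapse_y_gt0 : 0 < expand_y n w s + rebalance_y py pz -> 0 < py.
Proof.
by rewrite /n /w /s; case: path => [[?|?] [?|?] [?|?]] ?; subst; case_minmax; lra.
Qed.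

Lemma expand_collapse_z_gt0 : 0 < expand_z n w s + rebalance_z py pz -> 0 < pz.
Proof.
by rewrite /n /w /s; case: path => [[?|?] [?|?] [?|?]] ?; subst; case_minmax; lra.
Qed.

Lemma expand_collapse_path4_indep :
  path4_indep (expand_y n w s + rebalance_y py pz) (expand_a n w s + pa)
              (expand_b n w s + pb) (expand_z n w s + rebalance_z py pz).
Proof.
rewrite /n /w /s; case: path => [[?|?] [?|?] [?|?]]; subst;
  split; case_minmax; first [left; lra | right; lra].
Qed.
End ExpandCollapse.

Definition oy : 'I_4 := @Ordinal 4 0 isT.
Definition oa : 'I_4 := @Ordinal 4 1 isT.
Definition ob : 'I_4 := @Ordinal 4 2 isT.
Definition oz : 'I_4 := @Ordinal 4 3 isT.

Lemma ord4P (i : 'I_4) : [\/ i = oy, i = oa, i = ob | i = oz].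
Proof.
case: i => [[|[|[|[|//]]]] Hi];
  [constructor 1 | constructor 2 | constructor 3 | constructor 4]; exact: val_inj.
Qed.

Lemma sum_ord4 (F : 'I_4 -> R) :
  \big[Rplus/0]_(i : 'I_4) F i = F oy + F oa + F ob + F oz.
Proof.
rewrite !big_ord_recl big_ord0 -[RHS]Rplus_0_r !Rplus_assoc.
by congr (F _ + (F _ + (F _ + (F _ + _)))); apply: val_inj.
Qed.

Lemma Rzero_or_zero a b : 0 <= a -> 0 <= b -> ~ (0 < a /\ 0 < b) -> a = 0 \/ b = 0.
Proof.
move=> Ha Hb H; case: (Rle_eq_or_lt Ha) => ?; first by left.
by case: (Rle_eq_or_lt Hb) => ?; [right | case: H].
Qed.

Section Lozin.
Variables (V : finType) (e : rel V) (x : V) (Y Z : {set V}).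

Local Notation old := {v : V | v != x}.
Local Notation L := (lozin_rel e x Y Z).
Local Notation vy := (inr oy : LV x).
Local Notation va := (inr oa : LV x).
Local Notation vb := (inr ob : LV x).
Local Notation vz := (inr oz : LV x).
Local Notation north := (inr true : V + bool).
Local Notation south := (inr false : V + bool).

Lemma vertexP (v : V) : v = x \/ exists u : old, v = val u.
Proof.
case: (eqVneq v x) => [->|Hv]; first by left.
by right; exists (exist _ v Hv).
Qed.

Lemma sum_LV (p : LV x -> R) :
  \big[Rplus/0]_u p u = \big[Rplus/0]_(u : old) p (inl u) + (p vy + p va + p vb + p vz).
Proof. by rewrite big_sumType sum_ord4. Qed.

Lemma sum_suspension (q : V + bool -> R) :
  \big[Rplus/0]_w q w =
  \big[Rplus/0]_(u : old) q (inl (val u)) + q (inl x) + q north + q south.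
Proof.
rewrite big_sumType (bigD1 x) //= big_bool /=.
have -> : \big[Rplus/0]_(v | v != x) q (inl v) = \big[Rplus/0]_(u : old) q (inl (val u)).
  exact: (big_sub (predC1 x)).
by rewrite -!Rplus_assoc [q (inl x) + _]Rplus_comm.
Qed.

Definition lozin_indep (c : LV x -> R) :=
  [/\ forall u v : old, 0 < c (inl u) -> 0 < c (inl v) -> ~~ e (val u) (val v),
      0 < c vy -> forall u : old, val u \in Y -> c (inl u) = 0,
      0 < c vz -> forall u : old, val u \in Z -> c (inl u) = 0 &
      path4_indep (c vy) (c va) (c vb) (c vz)].

Lemma lozin_Ind_suppE (c : LV x -> R) : (forall w, 0 <= c w) ->
  Ind L (supp c) <-> lozin_indep c.
Proof.
move=> Hc; rewrite Ind_suppE //; split=> [H | [H1 H2 H3 [P1 P2 P3]]].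
  split.
  - by move=> u v; apply: (H (inl u) (inl v)).
  - move=> Py u Hu; case: (Rle_eq_or_lt (Hc (inl u))) => // Pu.
    by have := H _ _ Pu Py; rewrite /= Hu.
  - move=> Pz u Hu; case: (Rle_eq_or_lt (Hc (inl u))) => // Pu.
    by have := H _ _ Pu Pz; rewrite /= Hu.
  - by split; apply: Rzero_or_zero => // -[Pi Pj]; have := H _ _ Pi Pj.
have HY u : val u \in Y -> 0 < c vy -> 0 < c (inl u) -> False.
  by move=> Hu Py; rewrite (H2 Py u Hu); lra.
have HZ u : val u \in Z -> 0 < c vz -> 0 < c (inl u) -> False.
  by move=> Hu Pz; rewrite (H3 Pz u Hu); lra.
case=> [u|i] [v|j] Pu Pv; first exact: H1.
- case: (ord4P j) Pv => -> Pv //=; rewrite ?orbF; apply/negP => Hu.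
    exact: HY Hu Pv Pu.
  exact: HZ Hu Pv Pu.
- case: (ord4P i) Pu => -> Pu //=; rewrite ?orbF; apply/negP => Hv.
    exact: HY Hv Pu Pv.
  exact: HZ Hv Pu Pv.
case: (ord4P i) Pu => -> Pu; case: (ord4P j) Pv => -> Pv //=;
  by case: P1 P2 P3 => [E1|E1] [E2|E2] [E3|E3]; rewrite ?E1 ?E2 ?E3 in Pu Pv; lra.
Qed.

Definition collapse (p : LV x -> R) (w : V + bool) : R :=
  match w with
  | inl v => if (insub v : option old) is Some u then p (inl u) else collapse_x (p vy) (p vz)
  | inr true => collapse_north (p vy) (p vb) (p vz)
  | inr false => collapse_south (p vy) (p va) (p vz)
  end.

Definition expand (q : V + bool -> R) (u : LV x) : R :=
  let n := q north in let w := q (inl x) in let s := q south in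
  match u with
  | inl u => q (inl (val u))
  | inr i => match val i with
             | 0 => expand_y n w s | 1 => expand_a n w s
             | 2 => expand_b n w s | _ => expand_z n w s end
  end.

Definition rebalance (p : LV x -> R) (u : LV x) : R :=
  match u with
  | inr i => match val i with
             | 0 => rebalance_y (p vy) (p vz)
             | 3 => rebalance_z (p vy) (p vz)
             | _ => p u end
  | inl _ => p u
  end.

Lemma collapse_x_val p : collapse p (inl x) = collapse_x (p vy) (p vz).
Proof. by rewrite /collapse insubF // eqxx. Qed.

Lemma collapse_north_val p : collapse p north = collapse_north (p vy) (p vb) (p vz).
Proof. by []. Qed.

Lemma collapse_south_val p : collapse p south = collapse_south (p vy) (p va) (p vz).
Proof. by []. Qed.

Lemma collapse_old p (u : old) : collapse p (inl (val u)) = p (inl u).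
Proof. by rewrite /collapse valK. Qed.

Lemma expand_old q (u : old) : expand q (inl u) = q (inl (val u)).
Proof. by []. Qed.

Hypothesis e_simple : simple_graph e.
Hypothesis YZ_nbhd : Y :|: Z = [set v | e x v].

Lemma adj_xE v : e x v = (v \in Y) || (v \in Z).
Proof. by rewrite -in_setU YZ_nbhd inE. Qed.

Local Notation realL := (realization (Ind L)).
Local Notation realS := (realization (suspension (Ind e))).

Lemma lozin_realizationE p :
  realL p <-> [/\ forall v, 0 <= p v, \big[Rplus/0]_v p v = 1 & lozin_indep p].
Proof.
rewrite realizationE; last exact: Ind_downclosed.
by split=> -[H0 H1 H2]; split=> //; apply/lozin_Ind_suppE.
Qed.

Lemma suspension_realizationE q :
  realS q <-> [/\ forall v, 0 <= q v, \big[Rplus/0]_v q v = 1 & susp_indep e q].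
Proof.
rewrite realizationE; last exact/suspension_downclosed/Ind_downclosed.
by split=> -[H0 H1 H2]; split=> //; apply/suspension_Ind_suppE.
Qed.

Lemma collapse_realization p : realL p -> realS (collapse p).
Proof.
case/lozin_realizationE=> Hp0 Hp1 [H1 H2 H3 Hpath].
have [Cx CN CS] := collapse_ge0 (Hp0 vy) (Hp0 va) (Hp0 vb) (Hp0 vz).
apply/suspension_realizationE; split.
- by case=> [v|[]] //; case: (vertexP v) => [->|[u ->]]; rewrite ?collapse_x_val ?collapse_old.
- rewrite sum_suspension -Hp1 sum_LV collapse_x_val.
  under eq_bigr => u _ do rewrite collapse_old.
  by rewrite /= /collapse_x /collapse_north /collapse_south; ring.
split; last exact: collapse_poles (Hp0 vy) (Hp0 vz) Hpath.
have Hx (u : old) : 0 < collapse p (inl x) -> 0 < collapse p (inl (val u)) -> ~~ e x (val u).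
  rewrite collapse_x_val collapse_old => /collapse_x_gt0 [Py Pz] Pu.
  apply/negP; rewrite adj_xE => /orP [Hu|Hu].
    by rewrite (H2 Py u Hu) in Pu; lra.
  by rewrite (H3 Pz u Hu) in Pu; lra.
case: e_simple => e_sym e_irr v1 v2.
case: (vertexP v1) => [->|[u1 ->]]; case: (vertexP v2) => [->|[u2 ->]].
- by rewrite e_irr.
- exact: Hx.
- by move=> P1 P2; rewrite e_sym; apply: Hx.
- by rewrite !collapse_old; apply: H1.
Qed.

Lemma expand_realization q : realS q -> realL (expand q).
Proof.
case/suspension_realizationE=> Hq0 Hq1 [S1 S2].
have [Ey Ea Eb Ez] := expand_ge0 (Hq0 north) (Hq0 (inl x)) (Hq0 south).
apply/lozin_realizationE; split.
- by case=> [u|i]; [apply: Hq0 | case: (ord4P i) => ->].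
- by rewrite sum_LV -Hq1 sum_suspension /= expand_sum //; ring.
have HY (u : old) : 0 < q (inl x) -> val u \in Y -> q (inl (val u)) = 0.
  move=> Pw Hu; case: (Rle_eq_or_lt (Hq0 (inl (val u)))) => // Pu.
  by have := S1 _ _ Pw Pu; rewrite adj_xE Hu.
have HZ (u : old) : 0 < q (inl x) -> val u \in Z -> q (inl (val u)) = 0.
  move=> Pw Hu; case: (Rle_eq_or_lt (Hq0 (inl (val u)))) => // Pu.
  by have := S1 _ _ Pw Pu; rewrite adj_xE Hu orbT.
split=> /=.
- by move=> u v; apply: S1.
- by move/(expand_y_gt0 (Hq0 south)) => Pw u; apply: HY.
- by move/(expand_z_gt0 (Hq0 north)) => Pw u; apply: HZ.
- exact: expand_path4_indep (Hq0 north) (Hq0 (inl x)) S2.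
Qed.

Lemma rebalance_ge0_gt0 p : (forall v, 0 <= p v) ->
  (forall v, 0 <= rebalance p v) /\ (forall v, 0 < rebalance p v -> 0 < p v).
Proof.
move=> Hp0; have [Hy Hz] := rebalance_ge0 (Hp0 vy) (Hp0 vz).
have [Py Pz] := rebalance_gt0 (Hp0 vy) (Hp0 vz).
by split; case=> [u|i]; try case: (ord4P i) => ->; rewrite /=; auto.
Qed.

Lemma rebalance_realization p : realL p -> realL (rebalance p).
Proof.
have dL := @Ind_downclosed _ L.
move=> Hp; have [Hp0 Hp1 Hind] := (realizationE p dL).1 Hp.
have [Hr0 Hr] := rebalance_ge0_gt0 Hp0.
apply/(realizationE _ dL); split => //.
  by rewrite -Hp1 !sum_LV /= /rebalance_y; ring.
by apply: dL Hind _; apply: supp_subset.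
Qed.

Lemma collapse_lipschitz : lipschitz 8 collapse.
Proof.
move=> p q d Hd H w.
move: (Rabs_def2 _ _ (H vy)) (Rabs_def2 _ _ (H va)) => [? ?] [? ?].
move: (Rabs_def2 _ _ (H vb)) (Rabs_def2 _ _ (H vz)) => [? ?] [? ?].
case: w => [v|[]]; rewrite ?collapse_north_val ?collapse_south_val.
- case: (vertexP v) => [->|[u ->]]; rewrite ?collapse_x_val ?collapse_old.
    by apply: Rabs_def1; case_minmax; lra.
  by move: (Rabs_def2 _ _ (H (inl u))) => [? ?]; apply: Rabs_def1; lra.
- by apply: Rabs_def1; case_minmax; lra.
- by apply: Rabs_def1; case_minmax; lra.
Qed.

Lemma expand_lipschitz : lipschitz 8 expand.
Proof.
move=> p q d Hd H w.
move: (Rabs_def2 _ _ (H north)) (Rabs_def2 _ _ (H south)) => [? ?] [? ?].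
move: (Rabs_def2 _ _ (H (inl x))) => [? ?].
case: w => [u|i] /=.
  by move: (Rabs_def2 _ _ (H (inl (val u)))) => [? ?]; apply: Rabs_def1; simpl in *; lra.
by case: (ord4P i) => -> /=; apply: Rabs_def1; simpl in *; case_minmax; lra.
Qed.

Lemma rebalance_lipschitz : lipschitz 8 rebalance.
Proof.
move=> p q d Hd H w; move: (H w).
move: (Rabs_def2 _ _ (H vy)) (Rabs_def2 _ _ (H vz)) => [? ?] [? ?].
case: w => [u|i]; last case: (ord4P i) => ->; move=> /Rabs_def2 [? ?];
  apply: Rabs_def1; simpl in *; case_minmax; lra.
Qed.

Lemma collapse_expand_homotopic :
  homotopic realS realS (fun q => collapse (expand q)) (fun q => q).
Proof.
have dS := suspension_downclosed (@Ind_downclosed _ e).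
apply: (@homotopic_segment _ _ _ _ _ _ (8 * 8) 1); try lra.
- by apply: lipschitz_comp expand_lipschitz collapse_lipschitz; lra.
- exact: lipschitz_id.
- by move=> q Hq; apply/collapse_realization/expand_realization.
- by [].
move=> q Hq; have [Hq0 _ Hsupp] := (realizationE q dS).1 Hq.
have [Hc0 _ _] := (realizationE (collapse (expand q)) dS).1
  (collapse_realization (expand_realization Hq)).
have [_ _ [_ S2]] := (suspension_realizationE q).1 Hq.
apply: dS Hsupp _; rewrite subUset subxx andbT; apply: supp_subset => // w.
have [Ax An As] := collapse_expand_gt0 (Hq0 north) (Hq0 (inl x)) (Hq0 south) S2.
case: w => [v|[]] //; case: (vertexP v) => [->|[u ->]].
  by rewrite collapse_x_val.
by rewrite collapse_old.
Qed.

Lemma expand_collapse_rebalance_face p :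
  realL p -> Ind L (supp (expand (collapse p)) :|: supp (rebalance p)).
Proof.
move=> Hp; have [Hp0 _ [H1 H2 H3 Hpath]] := (lozin_realizationE p).1 Hp.
have [Hg0 _ _] := (lozin_realizationE _).1 (expand_realization (collapse_realization Hp)).
have [Hr0 _] := rebalance_ge0_gt0 Hp0.
move: (Hp0 vy) (Hp0 va) (Hp0 vb) (Hp0 vz) => Py0 Pa0 Pb0 Pz0.
have Hc0 w : 0 <= expand (collapse p) w + rebalance p w by have := Hg0 w; have := Hr0 w; lra.
rewrite -supp_addr //; apply/(lozin_Ind_suppE Hc0).
have Hold (u : old) :
    expand (collapse p) (inl u) + rebalance p (inl u) = p (inl u) + p (inl u).
  by rewrite expand_old collapse_old.
split.
- by move=> u v; rewrite !Hold => Pu Pv; apply: H1; lra.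
- move=> Py u Hu; rewrite Hold (H2 _ u Hu); first ring.
  apply: (expand_collapse_y_gt0 Py0 Pa0 Pb0 Pz0 Hpath).
  by move: Py; rewrite /expand collapse_x_val.
- move=> Pz u Hu; rewrite Hold (H3 _ u Hu); first ring.
  apply: (expand_collapse_z_gt0 Py0 Pa0 Pb0 Pz0 Hpath).
  by move: Pz; rewrite /expand collapse_x_val.
- by rewrite /expand collapse_x_val; apply: expand_collapse_path4_indep.
Qed.

Lemma expand_collapse_homotopic :
  homotopic realL realL (fun p => expand (collapse p)) (fun p => p).
Proof.
have dL := @Ind_downclosed _ L.
apply: (@homotopic_trans _ _ _ _ _ rebalance).
  apply: (@homotopic_segment _ _ _ _ _ _ (8 * 8) 8); try lra.
  - by apply: lipschitz_comp collapse_lipschitz expand_lipschitz; lra.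
  - exact: rebalance_lipschitz.
  - by move=> p Hp; apply/expand_realization/collapse_realization.
  - exact: rebalance_realization.
  - exact: expand_collapse_rebalance_face.
apply: (@homotopic_segment _ _ _ _ _ _ 8 1); try lra.
- exact: rebalance_lipschitz.
- exact: lipschitz_id.
- exact: rebalance_realization.
- by [].
move=> p Hp; have [Hp0 _ Hsupp] := (realizationE p dL).1 Hp.
have [Hr0 Hr] := rebalance_ge0_gt0 Hp0.
by apply: dL Hsupp _; rewrite subUset subxx andbT; apply: supp_subset.
Qed.
End Lozin.

Theorem mainTheorem14 (V : finType) (e : rel V) (x : V) (Y Z : {set V}) :
  simple_graph e ->
  Y :&: Z = set0 ->
  Y :|: Z = [set v | e x v] ->
  homotopy_equivalent (realization (Ind (lozin_rel e x Y Z)))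
                      (realization (suspension (Ind e))).
Proof.
(* The construction never uses that Y and Z are disjoint. *)
move=> e_simple _ YZ_nbhd; exists (@collapse V x), (@expand V x).
split; [|split; [|split; [|split; [|split]]]].
- by move=> p; apply: collapse_realization.
- by move=> q; apply: expand_realization.
- by apply: (lipschitz_continuous (C := 8)); [lra | apply: collapse_lipschitz].
- by apply: (lipschitz_continuous (C := 8)); [lra | apply: expand_lipschitz].
- exact: expand_collapse_homotopic e_simple YZ_nbhd.
- exact: collapse_expand_homotopic e_simple YZ_nbhd.
Qed.
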